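(* For $k\ge2$, the minimum Hamming distance of $\mathcal{S}_k^\beta$ is $d_H(\mathcal{S}_k^\beta)=L_\beta(k)-q^{s-1}L_\beta(k-1)=q^{s(k-1)}$, where $L_\beta(m)=q^{(s-1)(m-1)}\frac{q^m-1}{q-1}$.
   Context: Let $R$ be a finite commutative chain ring with maximal ideal $\langle\gamma\rangle$, nilpotency index $s$ and residue field $R/\langle\gamma\rangle\cong\mathbb{F}_q$. Fix coset representatives $T=\{e_0,\dots,e_{q-1}\}$ with $e_0=0,e_1=1$, ordered $e_0<\dots<e_{q-1}$; each $r\in R$ is uniquely $\sum_{i=0}^{s-1}r_i\gamma^i$, $r_i\in T$; order $R$ by $x>y$ iff $x_i>y_i$ in $T$ for the largest $i$ with $x_i\neq y_i$; list $R=\{\rho_0,\dots,\rho_{q^s-1}\}$ increasingly. $\mathbf{a}^{(m)}$ is the constant vector of length $m$. Define $G_1^\alpha=(\rho_0\ \cdots\ \rho_{q^s-1})$ and, for $k>1$, $G_k^\alpha$ as the matrix of $q^s$ column blocks, the $j$-th having first row $\boldsymbol{\rho_j}^{(q^{s(k-1)})}$ and $G_{k-1}^\alpha$ below. List $\langle\gamma\rangle$ increasingly as $a_0\gamma<\dots<a_{q^{s-1}-1}\gamma$. Define $G_1^\beta=(1)$ and, for $k>1$, $G_k^\beta$ as the matrix with column blocks: first a block with first row $\mathbf{1}^{(q^{s(k-1)})}$ and $G_{k-1}^\alpha$ below; then for each $j=0,\dots,q^{s-1}-1$ a block with first row the constant vector with entry $a_j\gamma$ and $G_{k-1}^\beta$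 below. $\mathcal{S}_k^\beta$ is the $R$-submodule generated by the rows of $G_k^\beta$. The minimum Hamming distance of a code is the minimum Hamming distance (number of differing coordinates) between two distinct codewords. *)

From HB Require Import structures.
From mathcomp Require Import all_boot all_order all_algebra.
Set Implicit Arguments. Unset Strict Implicit. Unset Printing Implicit Defensive.
Import GRing.Theory.
Local Open Scope ring_scope.

Section ChainCodes.
Variable R : finComUnitRingType.

(* R is a finite commutative chain ring with maximal ideal <g>
   (= set of non-units) and nilpotency index s of g. *)
Definition chain_ring (g : R) (s : nat) : Prop :=
  [/\ g \notin GRing.unit,
      (forall x : R, x \notin GRing.unit -> exists y, x = g * y),
      g ^+ s = 0 & g ^+ s.-1 != 0].

(* T = [:: e_0; ...; e_(q-1)] is a system of coset representatives of
   R / <g> listed in the fixed order e_0 < ... < e_(q-1), with e_0 = 0, e_1 = 1;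
   q := size T. *)
Definition coset_reps (g : R) (T : seq R) : Prop :=
  [/\ T`_0 = 0, T`_1 = 1 &
      forall x : R, exists! i : nat, (i < size T)%N /\ exists y, x - T`_i = g * y].

Variables (g : R) (s : nat) (T : seq R).
Let q := size T.

(* rho j = sum_(i<s) e_(j_i) g^i where j = sum_i j_i q^i (base-q digits);
   this is the j-th element of R in the increasing order. *)
Definition rho (j : nat) : R :=
  \sum_(i < s) T`_((j %/ q ^ i) %% q) * g ^+ i.

(* a_j g : the j-th element of <g> in increasing order (those with r_0 = e_0 = 0). *)
Definition agamma (j : nat) : R := rho (j * q).

(* G_k^alpha, entries indexed by (row i, column c), q^(sk) columns *)
Fixpoint Galpha (k i c : nat) : R :=
  match k with
  | 0 => 0
  | k'.+1 => if i == 0%N then rho (c %/ q ^ (s * k'))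
             else Galpha k' i.-1 (c %% q ^ (s * k'))
  end.

(* number of columns of G_k^beta *)
Fixpoint Lw (k : nat) : nat :=
  match k with
  | 0 => 0
  | k'.+1 => match k' with
             | 0 => 1
             | _ => (q ^ (s * k') + q ^ s.-1 * Lw k')%N
             end
  end.

Fixpoint Gbeta (k i c : nat) : R :=
  match k with
  | 0 => 0
  | k'.+1 =>
    match k' with
    | 0 => 1
    | _ => if (c < q ^ (s * k'))%N then
             (if i == 0%N then 1 else Galpha k' i.-1 c)
           else
             let c' := (c - q ^ (s * k'))%N in
             if i == 0%N then agamma (c' %/ Lw k')
             else Gbeta k' i.-1 (c' %% Lw k')
    end
  end.

Definition Sbeta (k : nat) : 'rV[R]_(Lw k) -> Prop :=
  fun v => exists a : 'I_k -> R,
    v = \row_(c < Lw k) \sum_(i < k) a i * Gbeta k i c.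

End ChainCodes.

Definition hamming (R : eqType) (n : nat) (x y : 'rV[R]_n) : nat :=
  #|[set j : 'I_n | x ord0 j != y ord0 j]|.

Definition min_hamming_distance (R : eqType) (n : nat) (C : 'rV[R]_n -> Prop)
  (d : nat) : Prop :=
  (exists x y, [/\ C x, C y, x != y & hamming x y = d]) /\
  (forall x y, C x -> C y -> x != y -> (d <= hamming x y)%N).

Definition Lbeta (q s m : nat) : nat :=
  (q ^ ((s - 1) * (m - 1)) * ((q ^ m - 1) %/ (q - 1)))%N.

(* The code is linear, so its minimum distance is the least weight of a codeword
   with a nonzero coefficient vector d.  Multiplying d by the largest power of g
   that does not kill it does not increase the weight and moves d into the socle
   ann(g).  A socle element a satisfies a * rho x = a * e_(x_0), so a nonzero socle
   combination of the rows of G_m^alpha, shifted by any constant, vanishes on at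
   most a 1/q fraction of the columns.  In G_k^beta the first row is constant on
   the head block and lies in <g> on the tail blocks, which socle coefficients
   annihilate; induction on k then gives weight >= q^(s(k-1)).  The bound is
   attained by g^(s-1) times the first row. *)
From mathcomp Require Import all_boot all_order all_algebra.
From mathcomp Require Import ring.
Set Implicit Arguments. Unset Strict Implicit. Unset Printing Implicit Defensive.
Import GRing.Theory.

Lemma sum_nat_mul (a b : nat) (F : nat -> nat) :
  \sum_(0 <= c < a * b) F c = \sum_(0 <= x < a) \sum_(0 <= y < b) F (x * b + y).
Proof.
rewrite big_nat_mul; apply: eq_bigr => x _.
rewrite -{1}[x * b]add0n big_addn mulSn addnK.
by apply: eq_bigr => y _; rewrite addnC.
Qed.

Lemma sum_nat_blocks (a b n : nat) (F : nat -> nat) :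
  \sum_(0 <= c < a + b * n) F c =
  \sum_(0 <= c < a) F c + \sum_(0 <= j < b) \sum_(0 <= y < n) F (a + (j * n + y)).
Proof.
rewrite (big_cat_nat (n := a)) ?leq_addr //; congr (_ + _).
rewrite -{1}[a]add0n big_addn addKn sum_nat_mul.
by apply: eq_bigr => j _; apply: eq_bigr => y _; rewrite addnC.
Qed.

Lemma sum_nat_bool_le1 n (P : pred nat) :
  {in [pred y | y < n] &, forall y y', P y -> P y' -> y = y'} ->
  \sum_(0 <= y < n) P y <= 1.
Proof.
elim: n => [|n IH] uniqP; first by rewrite big_geq.
rewrite big_nat_recr //=; case Pn: (P n); last first.
  by rewrite addn0 IH // => y y' hy hy'; apply: uniqP; rewrite inE ltnW.
rewrite big_nat_cond big1 // => y /andP[/andP[_ hy] _].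
case Py: (P y) => //.
have yn : y = n by apply: uniqP; rewrite // inE ltnS // ltnW.
by rewrite yn ltnn in hy.
Qed.

Local Open Scope ring_scope.

Lemma nilpotent_socle_multiple (R : pzRingType) (g : R) (s n : nat) (d : nat -> R) :
  g ^+ s = 0 -> (exists2 i, (i < n)%N & d i != 0) ->
  exists m, (forall i, (i < n)%N -> g * (g ^+ m * d i) = 0) /\
            exists2 i, (i < n)%N & g ^+ m * d i != 0.
Proof.
move=> gs0 [i hi di0].
pose P m := [exists j : 'I_n, g ^+ m * d j != 0].
have exP : exists m, P m.
  by exists 0%N; apply/existsP; exists (Ordinal hi); rewrite expr0 mul1r.
have ubP m : P m -> (m <= s)%N.
  case/existsP=> j; apply: contra_neqT; rewrite -ltnNge => /ltnW le_sm.
  by rewrite -(subnK le_sm) exprD gs0 mulr0 mul0r.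
case: (ex_maxnP exP ubP) => m /existsP[j dj] maxm.
exists m; split; last by exists j.
move=> i' hi'; apply/eqP; apply/contraT => nz.
have /maxm : P m.+1 by apply/existsP; exists (Ordinal hi'); rewrite exprS -mulrA.
by rewrite ltnn.
Qed.

Lemma nonzero_head_or_tail (V : nmodType) m (a : nat -> V) :
  (exists2 i, (i < m.+1)%N & a i != 0) ->
  (exists2 i, (i < m)%N & a i.+1 != 0) \/ (a 0%N != 0 /\ forall i, (i < m)%N -> a i.+1 = 0).
Proof.
case=> [[|i] hi ai0].
all: case: (boolP [exists j : 'I_m, a j.+1 != 0]) => [/existsP[j aj] | /existsPn tail0].
- by left; exists j.
- by right; split=> // j hj; move/negPn/eqP: (tail0 (Ordinal hj)).
- by left; exists j.
- by move/negP: (tail0 (Ordinal (hi : (i < m)%N))).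
Qed.

Lemma hamming_id (A : eqType) n (x : 'rV[A]_n) : hamming x x = 0%N.
Proof. by apply/eqP; rewrite cards_eq0; apply/eqP/setP => j; rewrite !inE eqxx. Qed.

Section BetaCode.
Variables (R : finComUnitRingType) (g : R) (s : nat) (T : seq R).
Hypotheses (chainR : chain_ring g s) (repsT : coset_reps g T).
Local Notation q := (size T).

Definition weight (n : nat) (F : nat -> R) : nat := (\sum_(0 <= c < n) (F c != 0%R))%N.
Definition zeros (n : nat) (F : nat -> R) : nat := (\sum_(0 <= c < n) (F c == 0%R))%N.

Lemma weight_add_zeros n F : (weight n F + zeros n F)%N = n.
Proof.
rewrite -big_split /= -[RHS]subn0 -[RHS]muln1 -sum_nat_const_nat.
by apply: eq_bigr => c _; case: (F c == 0).
Qed.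

Definition codeword (G : nat -> nat -> nat -> R) (m : nat) (a : nat -> R) (c : nat) : R :=
  \sum_(0 <= i < m) a i * G m i c.
Local Notation alpha_codeword := (codeword (Galpha g s T)).
Local Notation beta_codeword := (codeword (Gbeta g s T)).

Lemma codeword_eq0 G m a c : (forall i, (i < m)%N -> a i = 0) -> codeword G m a c = 0.
Proof. by move=> a0; rewrite /codeword big_nat big1 // => i /andP[_ hi]; rewrite a0 ?mul0r. Qed.

Lemma codewordZ G m x a c : codeword G m (fun i => x * a i) c = x * codeword G m a c.
Proof. by rewrite /codeword mulr_sumr; apply: eq_bigr => i _; rewrite mulrA. Qed.

Lemma codewordB G m a b c :
  codeword G m (fun i => a i - b i) c = codeword G m a c - codeword G m b c.
Proof. by rewrite /codeword -sumrB; apply: eq_bigr => i _; rewrite mulrBl. Qed.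

Lemma eq_weight n (F G : nat -> R) : (forall c, F c = G c) -> weight n F = weight n G.
Proof. by move=> FG; apply: eq_bigr => c _; rewrite FG. Qed.

Lemma weight_scale_le n (x : R) (F : nat -> R) :
  (weight n (fun c => x * F c)%R <= weight n F)%N.
Proof.
apply: leq_sum => c _; have [-> | _] := eqVneq (F c) 0; [by rewrite mulr0 eqxx | exact: leq_b1].
Qed.

Lemma weight_blocks a b n F : weight (a + b * n) F =
  (weight a F + \sum_(0 <= j < b) weight n (fun y => F (a + (j * n + y))))%N.
Proof. exact: sum_nat_blocks. Qed.

Lemma chain_ring_s_gt0 : (0 < s)%N.
Proof. by case: chainR => _ _; case: s => // /eqP; rewrite expr0 oner_eq0. Qed.

Lemma coset_reps_size_gt1 : (1 < q)%N.
Proof.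
case: repsT => _ T1 _; rewrite ltnNge; apply/negP => le_q1.
by move: T1; rewrite nth_default // => /eqP; rewrite eq_sym oner_eq0.
Qed.

Lemma coset_reps_size_gt0 : (0 < q)%N.
Proof. exact: ltnW coset_reps_size_gt1. Qed.

Lemma coset_reps_inj v v' z : (v < q)%N -> (v' < q)%N ->
  T`_v - T`_v' = g * z -> v = v'.
Proof.
case: repsT => _ _ uniqT hv hv' Ez; have [i [_ Ei]] := uniqT T`_v.
by rewrite -(Ei v) ?(Ei v'); split=> //; [exists z | exists 0; rewrite subrr mulr0].
Qed.

Lemma socle_annihilator_in_ideal a y : a != 0 -> g * a = 0 -> a * y = 0 ->
  exists z, y = g * z.
Proof.
case: chainR => _ nonunit_mul _ _ a0 ga0 ay0; apply: nonunit_mul; apply/negP => uy.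
by move/eqP: a0; apply; rewrite -(mulrK uy a) ay0 mul0r.
Qed.

Lemma rho_first_digit x : exists w, rho g s T x = T`_(x %% q) + g * w.
Proof.
case: s chain_ring_s_gt0 => // s' _; rewrite /rho big_ord_recl expn0 divn1 mulr1.
exists (\sum_(i < s') T`_((x %/ q ^ i.+1) %% q) * g ^+ i); congr (_ + _).
by rewrite mulr_sumr; apply: eq_bigr => i _; rewrite exprS mulrCA.
Qed.

Lemma socle_mul_rho_inj a x x' : a != 0 -> g * a = 0 ->
  a * rho g s T x = a * rho g s T x' -> (x %% q = x' %% q)%N.
Proof.
move=> a0 ga0 /eqP; rewrite -subr_eq0 -mulrBr => /eqP /(socle_annihilator_in_ideal a0 ga0).
have [[w ->] [w' ->]] := (rho_first_digit x, rho_first_digit x').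
move=> [z Ez]; apply: (coset_reps_inj (z := z - w + w')); rewrite ?ltn_pmod ?coset_reps_size_gt0 //.
by rewrite mulrDr mulrBr -Ez; ring.
Qed.

Lemma agamma_in_ideal j : exists w, agamma g s T j = g * w.
Proof.
case: repsT => T0 _ _; rewrite /agamma; have [w ->] := rho_first_digit (j * q).
by exists w; rewrite modnMl T0 add0r.
Qed.

Lemma rho_zeros (a b : R) : a != 0 -> g * a = 0 ->
  (q * zeros (q ^ s) (fun x => b + a * rho g s T x)%R <= q ^ s)%N.
Proof.
move=> a0 ga0.
have -> : (q ^ s = q ^ s.-1 * q)%N by rewrite -expnSr prednK // chain_ring_s_gt0.
rewrite /zeros sum_nat_mul mulnC leq_pmul2r ?coset_reps_size_gt0 //.
rewrite -[X in (_ <= X)%N]muln1 -[X in (_ <= X * 1)%N]subn0 -sum_nat_const_nat.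
(* a only sees the first digit of x, so each run of q consecutive x has one zero at most. *)
apply: leq_sum => u _; apply: sum_nat_bool_le1 => v v'; rewrite !inE => hv hv' /eqP Ev /eqP Ev'.
have : ((u * q + v) %% q = (u * q + v') %% q)%N.
  by apply: (socle_mul_rho_inj a0 ga0); apply: (addrI b); rewrite Ev Ev'.
by rewrite !modnMDl !modn_small.
Qed.

Lemma alpha_codeword_split m a x y : (y < q ^ (s * m))%N ->
  alpha_codeword m.+1 a (x * q ^ (s * m) + y) =
  a 0%N * rho g s T x + alpha_codeword m (fun i => a i.+1) y.
Proof.
move=> hy; rewrite /codeword big_nat_recl //=.
rewrite divnMDl ?divn_small ?addn0 ?(leq_ltn_trans (leq0n y) hy) //; congr (_ + _).
by apply: eq_bigr => i _; rewrite modnMDl modn_small.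
Qed.

Lemma alpha_codeword_zeros m a b :
  (forall i, (i < m)%N -> g * a i = 0) -> (exists2 i, (i < m)%N & a i != 0) ->
  (q * zeros (q ^ (s * m)) (fun c => b + alpha_codeword m a c)%R <= q ^ (s * m))%N.
Proof.
elim: m a b => [|m IH] a b socle_a; first by case.
set Q := (q ^ (s * m))%N; have Q0 : (0 < Q)%N by rewrite expn_gt0 coset_reps_size_gt0.
have -> : (q ^ (s * m.+1) = q ^ s * Q)%N by rewrite mulnS expnD.
rewrite /zeros sum_nat_mul.
under eq_big_nat => x _ do under eq_big_nat => y /andP[_ hy] do
  rewrite alpha_codeword_split // addrA.
case/nonzero_head_or_tail => [[j hj aj] | [a0 tail0]].
  rewrite big_distrr /= -[X in (_ <= X * _)%N]subn0 -sum_nat_const_nat.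
  apply: leq_sum => x _; apply: IH => [i hi|]; [exact: socle_a | by exists j].
under eq_big_nat => x _ do under eq_big_nat => y _ do rewrite codeword_eq0 // addr0.
under eq_big_nat => x _ do rewrite sum_nat_const_nat subn0.
by rewrite -big_distrr mulnCA [X in (_ <= X)%N]mulnC leq_pmul2l // rho_zeros // socle_a.
Qed.

Lemma Lw_blocks k : Lw s T k.+2 = (q ^ (s * k.+1) + q ^ s.-1 * Lw s T k.+1)%N.
Proof. by []. Qed.

Lemma Gbeta_head k i c : (c < q ^ (s * k.+1))%N ->
  Gbeta g s T k.+2 i c = if i == 0%N then 1 else Galpha g s T k.+1 i.-1 c.
Proof. by move=> hc; rewrite [LHS]/= hc. Qed.

Lemma Gbeta_tail k i z : Gbeta g s T k.+2 i (q ^ (s * k.+1) + z) =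
  if i == 0%N then agamma g s T (z %/ Lw s T k.+1) else Gbeta g s T k.+1 i.-1 (z %% Lw s T k.+1).
Proof. by rewrite [LHS]/= ltnNge leq_addr addKn. Qed.

Lemma beta_codeword_head k a c : (c < q ^ (s * k.+1))%N ->
  beta_codeword k.+2 a c = a 0%N + alpha_codeword k.+1 (fun i => a i.+1) c.
Proof.
move=> hc; rewrite /codeword big_nat_recl // Gbeta_head // mulr1; congr (_ + _).
by apply: eq_bigr => i _; rewrite Gbeta_head.
Qed.

Lemma beta_codeword_tail k a j y : (y < Lw s T k.+1)%N ->
  beta_codeword k.+2 a (q ^ (s * k.+1) + (j * Lw s T k.+1 + y)) =
  a 0%N * agamma g s T j + beta_codeword k.+1 (fun i => a i.+1) y.
Proof.
move=> hy; rewrite /codeword big_nat_recl // Gbeta_tail.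
rewrite divnMDl ?divn_small ?addn0 ?(leq_ltn_trans (leq0n y) hy) //; congr (_ + _).
by apply: eq_bigr => i _; rewrite Gbeta_tail modnMDl modn_small.
Qed.

Lemma beta_codeword_socle_weight k a :
  (forall i, (i < k.+1)%N -> g * a i = 0) -> (exists2 i, (i < k.+1)%N & a i != 0) ->
  (q ^ (s * k) <= weight (Lw s T k.+1) (beta_codeword k.+1 a))%N.
Proof.
elim: k a => [|k IH] a socle_a.
  case=> -[|//] _ a0.
  by rewrite muln0 expn0 /weight big_nat1 /codeword big_nat1 mulr1 a0.
set Q1 := (q ^ (s * k.+1))%N; set a' := fun i => a i.+1.
have socle_a' i : (i < k.+1)%N -> g * a' i = 0 by move=> hi; apply: socle_a.
rewrite Lw_blocks weight_blocks.
have head : weight Q1 (beta_codeword k.+2 a) =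
    weight Q1 (fun c => a 0%N + alpha_codeword k.+1 a' c).
  by apply: eq_big_nat => c /andP[_ hc]; rewrite beta_codeword_head.
under eq_bigr => j _.
  have -> : weight (Lw s T k.+1) (fun y => beta_codeword k.+2 a (Q1 + (j * Lw s T k.+1 + y))) =
      weight (Lw s T k.+1) (beta_codeword k.+1 a').
    apply: eq_big_nat => y /andP[_ hy]; rewrite beta_codeword_tail //.
    by have [w ->] := agamma_in_ideal j; rewrite mulrA [a 0%N * g]mulrC socle_a // mul0r add0r.
  over.
rewrite head sum_nat_const_nat subn0.
case/nonzero_head_or_tail => [[j hj aj] | [a0 tail0]].
  (* The head block has at most P zeros; the q^(s-1) tail blocks make up for them. *)
  have nz_a' : exists2 i, (i < k.+1)%N & a' i != 0 by exists j.
  set P := (q ^ (s.-1 + s * k))%N.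
  have Q1E : Q1 = (q * P)%N by rewrite -expnS -addSn prednK ?chain_ring_s_gt0 // -mulnS.
  have := weight_add_zeros Q1 (fun c => a 0%N + alpha_codeword k.+1 a' c).
  have := alpha_codeword_zeros (a 0%N) socle_a' nz_a'.
  rewrite -/Q1 {2}Q1E leq_pmul2l ?coset_reps_size_gt0 //.
  have := leq_mul (leqnn (q ^ s.-1)) (IH a' socle_a' nz_a'); rewrite -expnD -/P.
  move=> le_P_tail le_zeros_P split_Q1; rewrite -{1}split_Q1 leq_add2l.
  exact: leq_trans le_zeros_P le_P_tail.
rewrite /weight (eq_bigr (fun=> 1%N)) => [|c _]; last by rewrite codeword_eq0 // addr0 a0.
by rewrite sum_nat_const_nat subn0 muln1 leq_addr.
Qed.

Lemma beta_codeword_weight k a : (exists2 i, (i < k.+1)%N & a i != 0) ->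
  (q ^ (s * k) <= weight (Lw s T k.+1) (beta_codeword k.+1 a))%N.
Proof.
case: chainR => _ _ gs0 _ /(nilpotent_socle_multiple gs0) [m [socle nz]].
apply: leq_trans (beta_codeword_socle_weight socle nz) _.
by rewrite (eq_weight _ (fun c => codewordZ _ _ _ _ c)) weight_scale_le.
Qed.

Lemma beta_codeword_first_row_weight k :
  weight (Lw s T k.+2) (beta_codeword k.+2 (fun i => if i == 0%N then g ^+ s.-1 else 0)) =
  (q ^ (s * k.+1))%N.
Proof.
case: chainR => _ _ gs0 gs1; set e := fun i => _.
have tail0 j : weight (Lw s T k.+1)
    (fun y => beta_codeword k.+2 e (q ^ (s * k.+1) + (j * Lw s T k.+1 + y))) = 0%N.
  rewrite /weight big_nat big1 // => y /andP[_ hy].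
  rewrite beta_codeword_tail // codeword_eq0 // addr0; have [w ->] := agamma_in_ideal j.
  by rewrite /e /= mulrA -exprSr prednK ?chain_ring_s_gt0 // gs0 mul0r eqxx.
rewrite Lw_blocks weight_blocks; under eq_bigr do rewrite tail0.
rewrite big1_eq addn0 /weight (eq_big_nat _ _ (F2 := fun=> 1%N)) => [|c /andP[_ hc]].
  by rewrite sum_nat_const_nat subn0 muln1.
by rewrite beta_codeword_head // codeword_eq0 // addr0 gs1.
Qed.

Lemma hamming_rowE n (F G : nat -> R) :
  hamming (\row_(c < n) F c) (\row_(c < n) G c) = weight n (fun c => F c - G c).
Proof.
rewrite /hamming /weight -sum1_card big_mkcond big_mkord; apply: eq_bigr => c _.
by rewrite inE !mxE subr_eq0; case: (_ != _).
Qed.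

Lemma neq_codeword_rows G m n a b :
  \row_(c < n) codeword G m a c != \row_(c < n) codeword G m b c ->
  exists2 i, (i < m)%N & a i - b i != 0.
Proof.
case: (boolP [exists i : 'I_m, a i - b i != 0]) => [/existsP[i nz] _ | /existsPn eq_ab].
  by exists i.
case/eqP; apply/rowP => c; rewrite !mxE; apply/eqP; rewrite -subr_eq0 -codewordB.
by apply/eqP/codeword_eq0 => i hi; move/negPn/eqP: (eq_ab (Ordinal hi)).
Qed.

Lemma SbetaP k v : @Sbeta R g s T k.+1 v <->
  exists a, v = \row_(c < Lw s T k.+1) beta_codeword k.+1 a c.
Proof.
split=> [[a ->] | [a ->]].
  exists (fun i => a (inord i)); apply/rowP => c; rewrite !mxE /codeword big_mkord.
  by apply: eq_bigr => i _; rewrite inord_val.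
by exists (fun i => a i); apply/rowP => c; rewrite !mxE /codeword big_mkord.
Qed.

Lemma Sbeta_distance_lb k x y : @Sbeta R g s T k.+1 x -> @Sbeta R g s T k.+1 y -> x != y ->
  (q ^ (s * k) <= hamming x y)%N.
Proof.
move=> /SbetaP[a ->] /SbetaP[b ->] /neq_codeword_rows nz.
rewrite hamming_rowE (eq_weight _ (fun c => esym (codewordB _ _ _ _ c))).
exact: beta_codeword_weight.
Qed.

Lemma Sbeta_distance_attained k : exists x y,
  [/\ @Sbeta R g s T k.+2 x, @Sbeta R g s T k.+2 y, x != y & hamming x y = q ^ (s * k.+1)]%N.
Proof.
pose row a := \row_(c < Lw s T k.+2) beta_codeword k.+2 a c.
pose e i := if i == 0%N then g ^+ s.-1 else 0.
have dist : hamming (row e) (row (fun=> 0)) = (q ^ (s * k.+1))%N.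
  rewrite hamming_rowE -beta_codeword_first_row_weight.
  by apply: eq_weight => c; rewrite (codeword_eq0 _ _ (a := fun=> 0)) // subr0.
exists (row e), (row (fun=> 0)); split=> //; try by apply/SbetaP; eexists.
apply/eqP => same; move: dist; rewrite same hamming_id => /esym/eqP.
by rewrite expn_eq0 eqn0Ngt coset_reps_size_gt0.
Qed.

End BetaCode.

Lemma Lbeta_sub_pred q s k : (1 < q)%N -> (0 < s)%N -> (1 < k)%N ->
  (Lbeta q s k - q ^ (s - 1) * Lbeta q s (k - 1) = q ^ (s * (k - 1)))%N.
Proof.
case: k => [|[|k]] // q_gt1 s_gt0 _; rewrite subSS subn0.
have geom n : ((q ^ n - 1) %/ (q - 1) = \sum_(i < n) q ^ i)%N.
  by rewrite subn1 predn_exp -subn1 mulKn // subn_gt0.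
rewrite /Lbeta !geom !subn1 /= big_ord_recr /= mulnA -expnD.
rewrite -mulnS mulnDr addKn -expnD.
by rewrite -{2}[k.+1]mul1n -mulnDl addn1 prednK.
Qed.

Theorem corollary3p22 (R : finComUnitRingType) (g : R) (s : nat) (T : seq R)
    (k : nat) :
  chain_ring g s -> coset_reps g T -> (2 <= k)%N ->
  min_hamming_distance (@Sbeta R g s T k)
    (Lbeta (size T) s k - size T ^ (s - 1) * Lbeta (size T) s (k - 1))%N
  /\ (Lbeta (size T) s k - size T ^ (s - 1) * Lbeta (size T) s (k - 1)
      = size T ^ (s * (k - 1)))%N.
Proof.
move=> chainR repsT k_gt1.
rewrite Lbeta_sub_pred ?(coset_reps_size_gt1 repsT) ?(chain_ring_s_gt0 chainR) //.
split=> //; case: k k_gt1 => [|[|k]] // _; rewrite subSS subn0.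
by split; [exact: Sbeta_distance_attained | exact: Sbeta_distance_lb].
Qed.
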